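(* Let $k,r\in\mathbb N$, let $A\subseteq\Lambda_k^r$, $x\in\Lambda_k^r$ and $t>0$. If $(A^{-1}A)\cap U_t(x)=\varnothing$, then $|A|/|\Lambda_k^r|\le\exp(-t^2/4r)$.
   Context: $\Lambda_k=\{\lambda\in\mathbb C:\lambda^k=1\}$ is the multiplicative group of $k$-th roots of unity, and $\Lambda_k^r$ is its $r$-th Cartesian power with coordinatewise multiplication. For $A\subseteq\Lambda_k^r$, $A^{-1}A=\{a^{-1}b:a,b\in A\}$. Let $d_0$ be one half of Euclidean distance on $\Lambda_k$, and for $x,y\in\Lambda_k^r$ let $d(x,y)=\sum_{j=1}^r d_0(x_j,y_j)$. The Hamming ball is $U_t(x)=\{y\in\Lambda_k^r:d(x,y)\le t\}$. *)

From HB Require Import structures.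
From mathcomp Require Import all_boot all_order all_algebra.
From mathcomp Require Import complex.
From mathcomp Require Import reals.
From mathcomp.analysis Require Import sequences exp trigo.
Set Implicit Arguments. Unset Strict Implicit. Unset Printing Implicit Defensive.
Import Order.TTheory GRing.Theory Num.Theory.
Local Open Scope ring_scope.
Local Open Scope complex_scope.

(* Lambda_k = { omega_k ^ j : j < k } with omega_k = exp(2 pi i / k).
   A point of Lambda_k^r is encoded by its exponent vector
   e : {ffun 'I_r -> 'I_k}; its actual value in C^r is [pt e]. *)
Definition omega (R : realType) (k : nat) : R[i] :=
  (cos (2 * pi / k%:R)) +i* (sin (2 * pi / k%:R)).

Definition pt (R : realType) (k r : nat) (e : {ffun 'I_r -> 'I_k}) : 'I_r -> R[i] :=
  fun j => omega R k ^+ (e j).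

Definition d0 (R : realType) (z w : R[i]) : R := ComplexField.Normc.normc (z - w) / 2.

Definition dist (R : realType) (r : nat) (x y : 'I_r -> R[i]) : R :=
  \sum_(j < r) d0 (x j) (y j).

Definition inU (R : realType) (r : nat) (t : R) (x y : 'I_r -> R[i]) : Prop :=
  dist x y <= t.

Definition in_quot (R : realType) (k r : nat) (A : {set {ffun 'I_r -> 'I_k}})
  (y : 'I_r -> R[i]) : Prop :=
  exists a b, [/\ a \in A, b \in A & forall j, y j = (pt R a j)^-1 * pt R b j].

Arguments omega R k : clear implicits.
Arguments pt R {k r} e j.
Arguments in_quot {R k r} A y.

From HB Require Import structures.
From mathcomp Require Import all_boot all_order all_algebra.
From mathcomp Require Import complex.
From mathcomp Require Import reals.
From mathcomp.analysis Require Import sequences exp trigo.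
From mathcomp Require Import ring lra.
Set Implicit Arguments.
Unset Strict Implicit.
Unset Printing Implicit Defensive.

Import Order.TTheory GRing.Theory Num.Theory.
Local Open Scope ring_scope.

(* Talagrand's exponential method.  Call [exp_concentration lam D c] the
   property that P(A) E[exp (lam f)] <= c (uniform distribution) for every
   nonempty A and every f bounded by D(., A).  It tensorizes over a factor
   whose distance is at most 1 at the cost of a factor cosh^2 (lam / 2), by an
   elementary inequality for two sequences with [g i * h i <= 1]; so on
   Lambda_k^r it holds with c = cosh^2 (lam / 2) ^ r <= exp (r lam^2 / 2).
   If A^-1 A avoids U_t(x), then every point of the translate A x is at
   distance more than t from A, and f := t on A x gives
   P(A)^2 exp (lam t) <= exp (r lam^2 / 2); take lam = t / r, which is at
   most 1 because t < r. *)

Section RealBounds.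
Variable R : realType.

Lemma sum_mul_sum_le (I : finType) (g h : I -> R) (p : R) :
  1 <= p -> (forall i, 0 <= g i <= 1) -> (forall i, 0 <= h i <= p) ->
  (forall i, g i * h i <= 1) ->
  (\sum_i g i) * (\sum_i h i) <= #|I|%:R ^+ 2 * ((1 + p) ^+ 2 / (4 * p)).
Proof.
move=> p1 g01 h0p gh1.
have h_affine i : h i <= 1 + p - p * g i.
  have /andP[g0 g1] := g01 i; have /andP[h0 hp] := h0p i; have := gh1 i.
  have [pg1 _|pg1 ghi] := lerP (p * g i) 1; first by nra.
  have g_gt0 : 0 < g i by nra.
  by rewrite -(ler_pM2l g_gt0); nra.
set G := \sum_i g i; set H := \sum_i h i; set n := #|I|%:R.
have G0 : 0 <= G by apply: sumr_ge0 => i _; have /andP[] := g01 i.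
have HG : H <= n * (1 + p) - p * G.
  apply: le_trans (ler_sum _ (fun i _ => h_affine i)) _.
  by rewrite big_split /= sumrN sumr_const -mulr_sumr mulr_natl.
have := ler_wpM2l G0 HG.
have := sqr_ge0 (n * (1 + p) - 2 * p * G).
by rewrite mulrA ler_pdivlMr; nra.
Qed.

Lemma sum_mul_sum_le_scaled (I : finType) (g h : I -> R) (a M p : R) :
  0 < a -> 0 < M -> 1 <= p ->
  (forall i, 0 <= g i <= a) -> (forall i, 0 <= h i) ->
  (forall i, a * h i <= p * M) -> (forall i, g i * h i <= M) ->
  (\sum_i g i) * (\sum_i h i) <= M * (#|I|%:R ^+ 2 * ((1 + p) ^+ 2 / (4 * p))).
Proof.
move=> a0 M0 p1 g0a h0 ah gh.
have normalize : (\sum_i g i / a) * (\sum_i a * h i / M)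
    = (\sum_i g i) * (\sum_i h i) / M.
  rewrite -!mulr_suml -mulr_sumr; field.
  by rewrite !gt_eqF.
rewrite [X in _ <= X]mulrC -ler_pdivrMr // -normalize.
apply: sum_mul_sum_le => // i.
- have /andP[gi0 gia] := g0a i.
  by rewrite divr_ge0 ?(ltW a0) //= ler_pdivrMr // mul1r.
- by rewrite divr_ge0 ?mulr_ge0 ?(ltW a0) ?(ltW M0) //= ler_pdivrMr.
- have -> : g i / a * (a * h i / M) = g i * h i / M.
    by field; rewrite !gt_eqF.
  by rewrite ler_pdivrMr // mul1r.
Qed.

(* [kappa lam = cosh (lam / 2) ^+ 2]. *)
Definition kappa (lam : R) : R := (1 + expR lam) ^+ 2 / (4 * expR lam).

Lemma kappa_gt0 (lam : R) : 0 < kappa lam.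
Proof.
have e0 := expR_gt0 lam.
by rewrite divr_gt0 ?mulr_gt0 ?exprn_gt0 //; lra.
Qed.

Lemma expR_add_expRN_le {s : R} : 0 <= s <= 1 / 2 ->
  expR s + expR (- s) <= 2 * (1 + s ^+ 2).
Proof.
move=> /andP[s0 s_half]; set u := expR s.
have u1 : 1 <= u by have := expR_ge1Dx s; rewrite -/u; lra.
have u_mul_le1 : u * (1 - s) <= 1.
  have := ler_wpM2l (expR_ge0 s) (expR_ge1Dx (- s)).
  by rewrite -expRD subrr expR0 -/u.
have u2 : u <= 2 by nra.
have sq_le : (u - 1) ^+ 2 <= 2 * s ^+ 2 * u.
  have : (u - 1) ^+ 2 <= (s * u) ^+ 2 by rewrite lerXn2r ?nnegrE; nra.
  by nra.
have u0 : 0 < u by lra.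
rewrite expRN -/u -(ler_pM2l u0) mulrDr mulfV ?gt_eqF //.
nra.
Qed.

Lemma kappa_le_expR (lam : R) : 0 <= lam <= 1 -> kappa lam <= expR (lam ^+ 2 / 2).
Proof.
move=> /andP[lam0 lam1]; set s := lam / 2; set u := expR s.
have u0 : 0 < u by apply: expR_gt0.
have lamE : expR lam = u ^+ 2 by rewrite -expRM_natl /s; congr expR; field.
have cosh_le : 1 + u ^+ 2 <= 2 * u * (1 + s ^+ 2).
  have s01 : 0 <= s <= 1 / 2 by rewrite /s; apply/andP; split; lra.
  have := ler_wpM2l (ltW u0) (expR_add_expRN_le s01).
  by rewrite expRN -/u mulrDr mulfV ?gt_eqF //; nra.
have sq_le : (1 + s ^+ 2) ^+ 2 <= expR (lam ^+ 2 / 2).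
  have -> : lam ^+ 2 / 2 = 2%:R * s ^+ 2 by rewrite /s; field.
  rewrite expRM_natl lerXn2r ?nnegrE ?expR_ge0 ?addr_ge0 ?sqr_ge0 //.
  exact: expR_ge1Dx.
have cosh_sq : (1 + u ^+ 2) ^+ 2 <= 4 * u ^+ 2 * (1 + s ^+ 2) ^+ 2.
  have -> : 4 * u ^+ 2 * (1 + s ^+ 2) ^+ 2 = (2 * u * (1 + s ^+ 2)) ^+ 2 by ring.
  rewrite lerXn2r // nnegrE ?addr_ge0 ?sqr_ge0 //.
  by rewrite !mulr_ge0 ?addr_ge0 ?sqr_ge0 ?(ltW u0).
rewrite /kappa lamE ler_pdivrMr; last by rewrite mulr_gt0 ?exprn_gt0.
apply: le_trans cosh_sq _; rewrite [X in _ <= X]mulrC.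
by apply: ler_wpM2l sq_le; rewrite mulr_ge0 ?sqr_ge0.
Qed.

Definition exp_concentration (lam : R) {T : finType} (D : T -> T -> R) (c : R) :=
  forall (A : {set T}) (f : T -> R), A != set0 ->
    (forall x a, a \in A -> f x <= D x a) ->
    #|A|%:R * \sum_x expR (lam * f x) <= #|T|%:R ^+ 2 * c.

Lemma exp_concentration_bij (lam : R) (T T' : finType) (D : T -> T -> R)
    (D' : T' -> T' -> R) (c : R) (phi : T' -> T) :
  bijective phi -> (forall x y, D' x y = D (phi x) (phi y)) ->
  exp_concentration lam D c -> exp_concentration lam D' c.
Proof.
case=> psi phiK psiK D'E conc A' f' A'0 f'D'.
have phi_inj : injective phi := can_inj phiK.
have cardT : #|T'| = #|T|.
  rewrite -(card_imset predT phi_inj); apply: eq_card => x.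
  by rewrite inE; apply/imsetP; exists (psi x); rewrite ?inE ?psiK.
have sumE : \sum_x expR (lam * f' x) = \sum_x expR (lam * f' (psi x)).
  rewrite (reindex phi); last by exists psi => x _; [apply: phiK | apply: psiK].
  by apply: eq_bigr => x _; rewrite phiK.
rewrite cardT sumE -(card_imset A' phi_inj); apply: conc.
  by have /set0Pn[a aA'] := A'0; apply/set0Pn; exists (phi a); apply: imset_f.
move=> x _ /imsetP[a aA' ->].
by have := f'D' (psi x) a aA'; rewrite D'E psiK.
Qed.

Lemma sum_pair_snd (T1 T2 : finType) (F : T1 * T2 -> R) :
  \sum_p F p = \sum_w \sum_y F (y, w).
Proof. by rewrite exchange_big pair_big /=; apply: eq_big => // -[]. Qed.

Lemma exp_concentration_prod (lam : R) (T1 T2 : finType) (D : T1 -> T1 -> R)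
    (rho : T2 -> T2 -> R) (c : R) :
  0 <= lam -> 0 < c -> (forall w, rho w w = 0) -> (forall v w, rho v w <= 1) ->
  exp_concentration lam D c ->
  exp_concentration lam (fun x y : T1 * T2 => D x.1 y.1 + rho x.2 y.2) (c * kappa lam).
Proof.
move=> lam0 c0 rho0 rho1 conc A f A0 fD.
pose B := [set p.1 | p in A].
pose slice w := [set y | (y, w) \in A].
pose S w := \sum_y expR (lam * f (y, w)).
set M := #|T1|%:R ^+ 2 * c.
have [[y0 w0] y0w0A] := set0Pn _ A0.
have B0 : B != set0 by apply/set0Pn; exists y0; apply/imsetP; exists (y0, w0).
have B_gt0 : 0 < #|B|%:R :> R by rewrite ltr0n card_gt0.
have M0 : 0 < M by rewrite mulr_gt0 // exprn_gt0 // ltr0n; apply/card_gt0P; exists y0.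
have S0 w : 0 <= S w by apply: sumr_ge0 => y _; apply: expR_ge0.
have slice_sub w : (#|slice w| <= #|B|)%N.
  by apply/subset_leq_card/subsetP => y; rewrite inE => yw; apply/imsetP; exists (y, w).
have slice_bound w : #|slice w|%:R * S w <= M.
  have [->|sw0] := eqVneq (slice w) set0; first by rewrite cards0 mul0r ltW.
  apply: conc => // y a; rewrite inE => aw.
  by have := fD (y, w) (a, w) aw; rewrite /= rho0 addr0.
have proj_bound w : #|B|%:R * S w <= expR lam * M.
  have : #|B|%:R * \sum_y expR (lam * (f (y, w) - 1)) <= M.
    apply: conc => // y _ /imsetP[[b v] bvA ->] /=.
    by have := fD (y, w) (b, v) bvA; have := rho1 w v; rewrite /=; lra.
  have -> : \sum_y expR (lam * (f (y, w) - 1)) = S w * expR (- lam).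
    by rewrite mulr_suml; apply: eq_bigr => y _; rewrite -expRD; congr expR; ring.
  by rewrite mulrA expRN ler_pdivrMr ?expR_gt0 // [M * _]mulrC.
have cardA : #|A|%:R = \sum_w #|slice w|%:R :> R.
  rewrite -sum1_card natr_sum big_mkcond sum_pair_snd; apply: eq_bigr => w _.
  rewrite -sum1_card natr_sum [RHS]big_mkcond; apply: eq_bigr => y _.
  by rewrite inE; case: ((y, w) \in A).
have expR_ge1 : 1 <= expR lam by have := expR_ge1Dx lam; lra.
have := @sum_mul_sum_le_scaled T2 (fun w => #|slice w|%:R) S _ _ (expR lam)
  B_gt0 M0 expR_ge1.
rewrite card_prod natrM cardA sum_pair_snd.
have -> : (#|T1|%:R * #|T2|%:R) ^+ 2 * (c * kappa lam)
    = M * (#|T2|%:R ^+ 2 * kappa lam) by rewrite /M; ring.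
apply=> // w; rewrite ?ler0n ?ler_nat ?slice_sub //.
Qed.

Lemma exp_concentration_hamming (lam : R) (T : finType) (rho : T -> T -> R) n :
  0 <= lam -> (forall w, rho w w = 0) -> (forall v w, rho v w <= 1) ->
  exp_concentration lam (fun x y : {ffun 'I_n -> T} => \sum_j rho (x j) (y j))
    (kappa lam ^+ n).
Proof.
move=> lam0 rho0 rho1; elim: n => [|n IH].
  move=> A f /set0Pn[a aA] fD; rewrite expr0 mulr1 expr2.
  have f_le0 x : f x <= 0 by have := fD x a aA; rewrite big_ord0.
  apply: ler_pM; rewrite ?ler0n ?ler_nat ?max_card //.
    by apply: sumr_ge0 => x _; apply: expR_ge0.
  rewrite -sum1_card natr_sum; apply: ler_sum => x _.
  by rewrite expR_le1 mulr_ge0_le0.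
pose phi (x : {ffun 'I_n.+1 -> T}) := ([ffun j => x (lift ord0 j)], x ord0).
pose psi (p : {ffun 'I_n -> T} * T) : {ffun 'I_n.+1 -> T} :=
  [ffun i => if unlift ord0 i is Some j then p.1 j else p.2].
have prod_conc := exp_concentration_prod lam0 (exprn_gt0 n (kappa_gt0 lam)) rho0 rho1 IH.
rewrite exprSr; apply: (exp_concentration_bij (phi := phi) _ _ prod_conc).
  exists psi => [x|[y w]].
    by apply/ffunP => i; rewrite ffunE; case: unliftP => [j ->|->]; rewrite ?ffunE.
  by rewrite /phi ffunE unlift_none; congr pair; apply/ffunP => j; rewrite !ffunE liftK.
move=> x y; rewrite big_ord_recl /= addrC; congr (_ + _).
by apply: eq_bigr => j _; rewrite !ffunE.
Qed.

Lemma exp_concentration_sep (lam t c : R) (T : finType) (D : T -> T -> R)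
    (A : {set T}) (tau : T -> T) :
  (forall x y, 0 <= D x y) -> injective tau ->
  (forall a b, a \in A -> b \in A -> t <= D (tau a) b) ->
  exp_concentration lam D c -> A != set0 ->
  #|A|%:R ^+ 2 * expR (lam * t) <= #|T|%:R ^+ 2 * c.
Proof.
move=> D0 tau_inj tauD conc A0.
pose f y := if y \in tau @: A then t else 0.
apply: le_trans (conc A f A0 _); last first.
  move=> y b bA; rewrite /f; case: imsetP => [[a aA ->]|_]; [exact: tauD | exact: D0].
rewrite expr2 -mulrA ler_wpM2l // (bigID (mem (tau @: A))) /=.
rewrite -[X in X <= _]addr0 lerD ?sumr_ge0 // => [|y _]; last exact: expR_ge0.
rewrite (eq_bigr (fun=> expR (lam * t))) => [|y]; last by rewrite /f => ->.
by rewrite sumr_const card_imset // mulr_natl.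
Qed.

Lemma ratio_le_of_kappa_bound (a N t : R) (r : nat) :
  0 <= a -> 0 < N -> 0 < t < r%:R ->
  a ^+ 2 * expR (t / r%:R * t) <= N ^+ 2 * kappa (t / r%:R) ^+ r ->
  a / N <= expR (- t ^+ 2 / (4 * r%:R)).
Proof.
move=> a0 N0 /andP[t0 tr] bound; set lam := t / r%:R.
have r0 : 0 < r%:R :> R by apply: lt_trans tr.
have lam01 : 0 <= lam <= 1.
  by rewrite divr_ge0 ?(ltW t0) ?(ltW r0) //= ler_pdivrMr // mul1r ltW.
have kappa_pow : kappa lam ^+ r <= expR (lam ^+ 2 / 2 * r%:R).
  rewrite expRM_natr lerXn2r ?nnegrE ?expR_ge0 ?(ltW (kappa_gt0 _)) //.
  exact: kappa_le_expR.
have sq_bound : a ^+ 2 * expR (lam * t) <= N ^+ 2 * expR (lam ^+ 2 / 2 * r%:R).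
  by apply: le_trans bound _; rewrite ler_wpM2l ?sqr_ge0.
rewrite -(ler_sqr (x := _ / _)) ?nnegrE ?divr_ge0 ?(ltW N0) ?expR_ge0 //.
rewrite -expRM_natl expr_div_n.
have -> : 2%:R * (- t ^+ 2 / (4 * r%:R)) = lam ^+ 2 / 2 * r%:R - lam * t.
  by rewrite /lam; field; rewrite gt_eqF.
rewrite expRB ler_pdivrMr ?exprn_gt0 // mulrAC ler_pdivlMr ?expR_gt0 //.
by rewrite [X in _ <= X]mulrC.
Qed.

End RealBounds.

Section HalfChordDistance.
Variable R : realType.
Local Notation normc := ComplexField.Normc.normc.

Lemma d0_ge0 (u v : R[i]) : 0 <= d0 u v.
Proof. by rewrite divr_ge0 //; case: (u - v) => a b; rewrite sqrtr_ge0. Qed.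

Lemma d0xx (u : R[i]) : d0 u u = 0.
Proof. by rewrite /d0 subrr ComplexField.Normc.normc0 mul0r. Qed.

Lemma d0_le1 (u v : R[i]) : normc u = 1 -> normc v = 1 -> d0 u v <= 1.
Proof.
move=> u1 v1; rewrite /d0 ler_pdivrMr // mul1r.
by apply: le_trans (le_normcD u (- v)) _; rewrite normcN u1 v1.
Qed.

Lemma d0_mull (u v w : R[i]) : normc u = 1 -> d0 (u * v) (u * w) = d0 v w.
Proof.
by move=> u1; rewrite /d0 -mulrBr ComplexField.Normc.normcM u1 mul1r.
Qed.

Lemma dist_le_dim (r : nat) (x y : 'I_r -> R[i]) :
  (forall j, normc (x j) = 1) -> (forall j, normc (y j) = 1) -> dist x y <= r%:R.
Proof.
move=> x1 y1; rewrite -[r in r%:R]card_ord -sumr_const.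
by apply: ler_sum => j _; apply: d0_le1.
Qed.

End HalfChordDistance.

Section RootsOfUnity.
Variables (R : realType) (k : nat).
Hypothesis k_gt0 : (0 < k)%N.
Local Open Scope complex_scope.
Local Notation normc := ComplexField.Normc.normc.
Local Notation omega := (omega R k).

Lemma omegaX n :
  omega ^+ n = cos (n%:R * (2 * pi / k%:R)) +i* sin (n%:R * (2 * pi / k%:R)).
Proof.
set th := 2 * pi / k%:R; elim: n => [|n IH]; first by rewrite expr0 mul0r cos0 sin0.
have -> : n.+1%:R * th = th + n%:R * th by rewrite -addn1 natrD; ring.
rewrite exprS IH cosD sinD; apply/eqP; rewrite eq_complex /= eqxx /=.
by apply/eqP; ring.
Qed.

Lemma normc_omegaX n : normc (omega ^+ n) = 1.
Proof. by rewrite omegaX /= cos2Dsin2 sqrtr1. Qed.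

Lemma omegaX_neq0 n : omega ^+ n != 0.
Proof.
apply: contra_eq_neq (normc_omegaX n) => ->.
by rewrite ComplexField.Normc.normc0 eq_sym oner_neq0.
Qed.

Lemma omegaX_mod i j : omega ^+ ((i + j) %% k) = omega ^+ i * omega ^+ j.
Proof.
have omega_k : omega ^+ k = 1.
  have -> : omega ^+ k = cos (pi *+ 2) +i* sin (pi *+ 2).
    by rewrite omegaX mulr2n; congr (_ +i* _); congr (_ _); field;
      rewrite pnatr_eq0 -lt0n.
  by rewrite cos2pi sin2pi.
by rewrite -exprD {2}(divn_eq (i + j) k) exprD mulnC exprM omega_k expr1n mul1r.
Qed.

End RootsOfUnity.

Section HammingBall.
Variables (R : realType) (k r : nat).
Hypothesis k_gt0 : (0 < k)%N.
Local Notation point := {ffun 'I_r -> 'I_k}.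

Definition mulpt (a x : point) : point :=
  [ffun j => Ordinal (ltn_pmod (a j + x j) k_gt0)].

Lemma mulpt_inj x : injective (mulpt ^~ x).
Proof.
move=> a b /ffunP ab; apply/ffunP => j; apply: val_inj.
have /(congr1 val)/eqP := ab j; rewrite !ffunE /= eqn_modDr.
by rewrite !modn_small // => /eqP.
Qed.

Lemma pt_mulpt a x j : pt R (mulpt a x) j = pt R a j * pt R x j.
Proof. by rewrite /pt ffunE omegaX_mod. Qed.

Lemma dist_pt_quot (x a b : point) :
  dist (pt R x) (fun j => (pt R a j)^-1 * pt R b j) = dist (pt R (mulpt a x)) (pt R b).
Proof.
apply: eq_bigr => j _; rewrite pt_mulpt -(d0_mull _ _ (normc_omegaX R k (a j))).
by rewrite mulrA mulfV ?mul1r // omegaX_neq0.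
Qed.

End HammingBall.

Theorem lemma6p2 (R : realType) (k r : nat) (hk : (0 < k)%N)
  (A : {set {ffun 'I_r -> 'I_k}}) (x : {ffun 'I_r -> 'I_k}) (t : R) (ht : 0 < t) :
  (forall y : 'I_r -> R[i], ~ (in_quot A y /\ inU t (pt R x) y)) ->
  (#|A|%:R / #|{ffun 'I_r -> 'I_k}|%:R : R) <= expR (- (t ^+ 2) / (4 * r%:R)).
Proof.
move=> no_quot.
have [->|A0] := eqVneq A set0; first by rewrite cards0 mul0r expR_ge0.
have sep a b : a \in A -> b \in A -> t < dist (pt R (mulpt hk a x)) (pt R b).
  move=> aA bA; rewrite -dist_pt_quot ltNge; apply/negP => close.
  by apply: (no_quot (fun j => (pt R a j)^-1 * pt R b j)); split; first exists a, b.
have [a aA] := set0Pn _ A0.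
have t_lt_r : t < r%:R.
  apply: lt_le_trans (sep a a aA aA) _.
  by apply: dist_le_dim => j; apply: normc_omegaX.
have conc := exp_concentration_hamming (n := r) (ltW (divr_gt0 ht (lt_trans ht t_lt_r)))
  (fun i : 'I_k => d0xx (omega R k ^+ i))
  (fun i j : 'I_k => d0_le1 (normc_omegaX R k i) (normc_omegaX R k j)).
have := exp_concentration_sep (fun u v => sumr_ge0 _ (fun j _ => d0_ge0 _ _))
  (mulpt_inj (k_gt0 := hk) (x := x)) (fun a b aA bA => ltW (sep a b aA bA)) conc A0.
apply: ratio_le_of_kappa_bound; rewrite ?ler0n ?ltr0n ?card_gt0 ?ht //.
by apply/card_gt0P; exists a.
Qed.
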